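(* Let $a_1,\dots,a_n\in S^d$, and run Algorithm 2.9 (described in the context). Then $\mathrm{def}\,Q_k\le t^{-1}$ after at most $t^2$ steps. That is, for every real $t\ge1$ and every index $k\ge t^2$ for which $Q_k$ is produced, $\mathrm{def}\,Q_k\le 1/t$.
   Context: $S^d$ is the unit sphere in $\mathbb{R}^{d+1}$ and $O$ is the origin. An index $m$ is a most violated constraint for $x\in S^d$ if $a_m^Tx=\min_j a_j^Tx$. A finite set $Q$ is positively spanning if it is affinely independent and $O\in\mathrm{conv}\,Q$. For affinely independent $Q$ whose projection $O'$ of $O$ onto $\mathrm{aff}\,Q$ lies in $\mathrm{conv}\,Q$, $\mathrm{def}\,Q=\|O'\|$. The touching sphere of an affinely independent $Q$ is the unique sphere $\{z:\|z-C\|=R\}$ with $C\in\mathrm{aff}\,Q$ containing $Q$. Algorithm 2.9: (1) Choose any $j$ and set $k=1$, $x^1=a_j$, $Q_1=\{a_j\}$. (2) If $a_i^Tx^k\ge0$ for all $i$, stop. Otherwise let $m$ be a most violated constraint for $x^k/\|x^k\|$, and let $y$ be the point on the line through $x^k$ and $a_m$ closest to the origin. (3) If $Q_k\cup\{a_m\}$ is positively spanning, stop. (4) Compute the center $C$ of the touching sphere of $Q_k\cup\{a_m\}$. (5) If $C\in\mathrm{conv}(Q_k\cup\{a_m\})$, set $x^{k+1}=C$, $Q_{k+1}=Q_k\cup\{a_m\}$ and $k:=k+1$, then go to (2). (6) Otherwise, let $y$ be the point where $\overline{yC}$ meets the relative boundary of $\mathrm{conv}(Q_k\cup\{a_m\})$.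 Let $F$ be a facet containing $y$, and let $a_j$ be the vertex of $Q_k$ not in $F$. Set $Q_k:=Q_k\setminus\{a_j\}$ and go to (4). *)

From HB Require Import structures.
From mathcomp Require Import all_boot all_order all_algebra.
From mathcomp Require Import reals.
Set Implicit Arguments.
Unset Strict Implicit.
Unset Printing Implicit Defensive.
Import Order.TTheory GRing.Theory Num.Theory.
Local Open Scope ring_scope.

Section Defs.
Variable R : realType.
Variable d n : nat.
Notation vec := 'rV[R]_(d.+1).

Definition dot (u v : vec) : R := \sum_(i < d.+1) u 0 i * v 0 i.
Definition norm (u : vec) : R := Num.sqrt (dot u u).

(* The constraint vectors a_1..a_n are a family a : 'I_n -> vec; a subset Q of
   {a_i} is represented by a set of indices S : {set 'I_n}. *)
Variable a : 'I_n -> vec.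

Definition in_aff (S : {set 'I_n}) (x : vec) : Prop :=
  exists c : 'I_n -> R, (forall i, i \notin S -> c i = 0) /\
    \sum_i c i = 1 /\ x = \sum_i c i *: a i.

Definition in_conv (S : {set 'I_n}) (x : vec) : Prop :=
  exists c : 'I_n -> R, (forall i, i \notin S -> c i = 0) /\
    (forall i, 0 <= c i) /\ \sum_i c i = 1 /\ x = \sum_i c i *: a i.

Definition aff_indep (S : {set 'I_n}) : Prop :=
  forall c : 'I_n -> R, (forall i, i \notin S -> c i = 0) ->
    \sum_i c i = 0 -> \sum_i c i *: a i = 0 -> forall i, c i = 0.

Definition pos_spanning (S : {set 'I_n}) : Prop :=
  aff_indep S /\ in_conv S 0.

(* relative interior / relative boundary of conv Q (conv Q is closed) *)
Definition in_relint (S : {set 'I_n}) (x : vec) : Prop :=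
  in_conv S x /\ exists e : R, 0 < e /\
    forall z, in_aff S z -> norm (z - x) < e -> in_conv S z.

Definition in_relbd (S : {set 'I_n}) (x : vec) : Prop :=
  in_conv S x /\ ~ in_relint S x.

Definition touch_center (S : {set 'I_n}) (C : vec) : Prop :=
  aff_indep S /\ in_aff S C /\
  exists r : R, forall i, i \in S -> norm (a i - C) = r.

Definition proj_origin (S : {set 'I_n}) (p : vec) : Prop :=
  in_aff S p /\ forall z, in_aff S z -> norm p <= norm z.

(* def Q = r : defined when O' lies in conv Q, and then equals ||O'|| *)
Definition defect (S : {set 'I_n}) (r : R) : Prop :=
  exists p, proj_origin S p /\ in_conv S p /\ r = norm p.

Definition most_violated (m : 'I_n) (u : vec) : Prop :=
  forall j, dot (a m) u <= dot (a j) u.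

Definition closest_on_line (x b y : vec) : Prop :=
  (exists s : R, y = x + s *: (b - x)) /\
  forall s : R, norm y <= norm (x + s *: (b - x)).

Definition exit_point (S : {set 'I_n}) (y C y' : vec) : Prop :=
  (exists s : R, 0 <= s <= 1 /\ y' = y + s *: (C - y) /\
     forall s' : R, s < s' <= 1 -> ~ in_conv S (y + s' *: (C - y))) /\
  in_relbd S y'.

(* The inner loop (4)-(6) with the new constraint m: from the current Q_k
   (index set S) and current point y, it ends at step (5) with
   Q_{k+1} = S' and x^{k+1} = x'. *)
Inductive inner_loop (m : 'I_n) : {set 'I_n} -> vec -> {set 'I_n} -> vec -> Prop :=
| inner_done S y C :
    touch_center (m |: S) C -> in_conv (m |: S) C ->
    inner_loop m S y (m |: S) C
| inner_drop S y C y' j S' x' :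
    touch_center (m |: S) C -> ~ in_conv (m |: S) C ->
    exit_point (m |: S) y C y' ->
    (* F = conv((Q_k u {a_m}) \ {a_j}) is a facet containing y', a_j in Q_k *)
    j \in S -> in_conv ((m |: S) :\ j) y' ->
    inner_loop m (S :\ j) y' S' x' ->
    inner_loop m S y S' x'.

(* One full iteration of the algorithm from (Q_k, x^k) to (Q_{k+1}, x^{k+1})
   in which the algorithm does not stop. *)
Definition alg_step (S : {set 'I_n}) (x : vec) (S' : {set 'I_n}) (x' : vec)
  : Prop :=
  (exists i, dot (a i) x < 0) /\
  exists m y, most_violated m ((norm x)^-1 *: x) /\
    closest_on_line x (a m) y /\
    ~ pos_spanning (m |: S) /\
    inner_loop m S y S' x'.

Definition alg_run (K : nat) (Qs : nat -> {set 'I_n}) (xs : nat -> vec)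
  : Prop :=
  exists j, Qs 1%N = [set j] /\ xs 1%N = a j /\
    forall k, (1 <= k < K)%N -> alg_step (Qs k) (xs k) (Qs k.+1) (xs k.+1).

End Defs.

(* Every iterate x^k is the projection O' of the origin onto aff Q_k and lies
   in conv Q_k, so def Q_k = |x^k|.  Since the a_i are unit vectors, the centre
   of the touching sphere of a subset is exactly the point of its affine hull
   nearest to O; and each move of the inner loop goes along a segment towards
   such a centre, which cannot increase the norm.  Hence each iteration
   replaces u = |x^k|^2 by at most |y|^2, and because a_m . x^k < 0 the point y
   on the line through x^k and a_m satisfies |y|^2 <= u / (1 + u).  From
   u_1 = 1 this gives u_k <= 1/k, i.e. def Q_k <= 1/t once k >= t^2. *)
From HB Require Import structures.
From mathcomp Require Import all_boot all_order all_algebra.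
From mathcomp Require Import reals.
From mathcomp Require Import ring lra.
Set Implicit Arguments.
Unset Strict Implicit.
Unset Printing Implicit Defensive.
Import Order.TTheory GRing.Theory Num.Theory.
Local Open Scope ring_scope.

Section InnerProduct.
Variables (R : realType) (d : nat).
Local Notation vec := 'rV[R]_(d.+1).
Implicit Types u v w x y b C : vec.

Lemma dotC u v : dot u v = dot v u.
Proof. by apply: eq_bigr => i _; rewrite mulrC. Qed.

Lemma dotDl u v w : dot (u + v) w = dot u w + dot v w.
Proof. by rewrite /dot -big_split; apply: eq_bigr => i _; rewrite mxE mulrDl. Qed.

Lemma dotZl c u v : dot (c *: u) v = c * dot u v.
Proof. by rewrite /dot mulr_sumr; apply: eq_bigr => i _; rewrite mxE mulrA. Qed.

Lemma dotNl u v : dot (- u) v = - dot u v.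
Proof. by rewrite -scaleN1r dotZl mulN1r. Qed.

Lemma dotBl u v w : dot (u - v) w = dot u w - dot v w.
Proof. by rewrite dotDl dotNl. Qed.

Lemma dotDr u v w : dot w (u + v) = dot w u + dot w v.
Proof. by rewrite dotC dotDl !(dotC w). Qed.

Lemma dotZr c u v : dot v (c *: u) = c * dot v u.
Proof. by rewrite dotC dotZl dotC. Qed.

Lemma dotBr u v w : dot w (u - v) = dot w u - dot w v.
Proof. by rewrite dotC dotBl !(dotC w). Qed.

Lemma dotNr u v : dot v (- u) = - dot v u.
Proof. by rewrite dotC dotNl dotC. Qed.

Lemma dotr0 u : dot u 0 = 0.
Proof. by rewrite -(scale0r 0) dotZr mul0r. Qed.

Lemma dot_suml (I : finType) (F : I -> vec) v :
  dot (\sum_j F j) v = \sum_j dot (F j) v.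
Proof.
rewrite /dot; under eq_bigr do rewrite summxE mulr_suml.
by rewrite exchange_big.
Qed.

Lemma dotvv_ge0 u : 0 <= dot u u.
Proof. by apply: sumr_ge0 => i _; rewrite -expr2 sqr_ge0. Qed.

Lemma dotvv_eq0 u : dot u u = 0 -> u = 0.
Proof.
move=> u0; apply/rowP => i; rewrite mxE; apply/eqP; rewrite -sqrf_eq0 expr2.
by apply/eqP; apply: psumr_eq0P u0 i isT => j _; rewrite -expr2 sqr_ge0.
Qed.

Lemma norm_gt0 u : u != 0 -> 0 < norm u.
Proof.
move=> /eqP u0; rewrite sqrtr_gt0 lt_neqAle dotvv_ge0 andbT eq_sym.
by apply/eqP => /dotvv_eq0.
Qed.

Lemma dot_line x b s : dot (x + s *: (b - x)) (x + s *: (b - x)) =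
  dot x x + 2 * s * (dot x b - dot x x) + s ^+ 2 * (dot b b - 2 * dot x b + dot x x).
Proof.
by rewrite !(dotDl, dotDr, dotZl, dotZr, dotNl, dotNr) (dotC b x); ring.
Qed.

(* Convexity of |.|^2 along the segment: |y + s (C - y)|^2 is at most
   (1 - s) |y|^2 + s |C|^2. *)
Lemma dot_segment_le y C s : 0 <= s <= 1 -> dot C C <= dot y y ->
  dot (y + s *: (C - y)) (y + s *: (C - y)) <= dot y y.
Proof.
move=> /andP[s0 s1] Cy; rewrite dot_line.
have := dotvv_ge0 (y - C); rewrite !(dotBl, dotBr) (dotC C y) => yC.
have : 0 <= s * (1 - s) by apply: mulr_ge0; lra.
nra.
Qed.

(* The minimum over the line is at most its value at s = u / (1 + u), where
   u = |x|^2; the term 2 s (1 - s) (x . b) is dropped using x . b <= 0. *)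
Lemma closest_on_line_le x b y : dot b b = 1 -> dot x b <= 0 ->
  closest_on_line x b y -> dot y y <= dot x x / (1 + dot x x).
Proof.
move=> b1 xb [_ ymin]; set u := dot x x; set s := u / (1 + u).
have u0 : 0 <= u := dotvv_ge0 x.
have su : s * (1 + u) = u by rewrite /s mulfVK // gt_eqF //; lra.
have s01 : 0 <= s <= 1 by rewrite /s divr_ge0 ?ler_pdivrMr //=; lra.
have : 0 <= s * (1 - s) by case/andP: s01 => s0 s1; apply: mulr_ge0; lra.
move: (ymin s); rewrite ler_sqrt ?dotvv_ge0 // dot_line b1 -/u => ys ss.
apply: le_trans ys _; rewrite -/s; nra.
Qed.

End InnerProduct.

Section Algorithm.
Variables (R : realType) (d n : nat) (a : 'I_n -> 'rV[R]_(d.+1)).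
Hypothesis a_unit : forall i, norm (a i) = 1.
Local Notation vec := 'rV[R]_(d.+1).
Implicit Types (S T : {set 'I_n}) (x y z : vec).

Lemma dot_aa i : dot (a i) (a i) = 1.
Proof. by rewrite -[LHS]sqr_sqrtr ?dotvv_ge0 // [Num.sqrt _]a_unit expr1n. Qed.

Lemma in_conv_aff S x : in_conv a S x -> in_aff a S x.
Proof. by case=> c [c0 [_ cx]]; exists c. Qed.

Lemma in_aff_subset S T x : S \subset T -> in_aff a S x -> in_aff a T x.
Proof.
move=> /subsetP ST [c [c0 cx]]; exists c; split=> // i iT; apply: c0.
exact: contra (ST i) iT.
Qed.

Lemma in_aff_line S x y s : in_aff a S x -> in_aff a S y ->
  in_aff a S (x + s *: (y - x)).
Proof.
case=> c [c0 [c1 ->]] [e [e0 [e1 ->]]].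
exists (fun i => c i + s * (e i - c i)); split.
  by move=> i iS; rewrite c0 ?e0 // subrr mulr0 addr0.
split; first by rewrite big_split /= -mulr_sumr sumrB c1 e1 subrr mulr0 addr0.
rewrite -sumrB scaler_sumr -big_split; apply: eq_bigr => i _ /=.
by rewrite scalerDl -scalerA scalerBl.
Qed.

Lemma in_conv_set1 j : in_conv a [set j] (a j).
Proof.
exists (fun i => (i == j)%:R); split; first by move=> i; rewrite inE => /negbTE ->.
split; first by move=> i; case: (i == j).
split; first by rewrite (bigD1 j) //= eqxx big1 ?addr0 // => i /negbTE ->.
by rewrite (bigD1 j) //= eqxx scale1r big1 ?addr0 // => i /negbTE ->; rewrite scale0r.
Qed.

Lemma in_aff_set1 j z : in_aff a [set j] z -> z = a j.
Proof.
case=> c [c0 [c1 ->]].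
have cE i : i != j -> c i = 0 by move=> ij; rewrite c0 // inE.
rewrite (bigD1 j) //= big1 => [|i /cE ->]; last by rewrite scale0r.
move: c1; rewrite (bigD1 j) //= big1 => [|i /cE //].
by rewrite !addr0 => ->; rewrite scale1r.
Qed.

(* All a_i with i in S lie on the sphere around C and on the unit sphere, so
   a_i . C is a constant k on S; hence z . C = k for every z in aff S, in
   particular |C|^2 = k, and |z|^2 = |C|^2 + |z - C|^2. *)
Lemma touch_center_min S C z : touch_center a S C -> in_aff a S z ->
  dot C C <= dot z z.
Proof.
case=> _ [[g [g0 [g1 eC]]] [r hr]] [c [c0 [c1 ez]]].
pose k := (1 + dot C C - r ^+ 2) / 2.
have aC i : i \in S -> dot (a i) C = k.
  move=> iS; have : dot (a i - C) (a i - C) = r ^+ 2.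
    by rewrite -(hr i iS) sqr_sqrtr // dotvv_ge0.
  rewrite dotBl !dotBr dot_aa (dotC C (a i)) /k; lra.
have affC (f : 'I_n -> R) : (forall i, i \notin S -> f i = 0) -> \sum_i f i = 1 ->
    dot (\sum_i f i *: a i) C = k.
  move=> f0 f1; rewrite dot_suml -[k]mul1r -f1 mulr_suml.
  apply: eq_bigr => i _; rewrite dotZl.
  by case: (boolP (i \in S)) => [/aC -> | /f0 ->]; rewrite ?mul0r.
have CC : dot C C = k by rewrite {1}eC affC.
have zC : dot z C = k by rewrite ez affC.
have := dotvv_ge0 (z - C); rewrite !(dotBl, dotBr) (dotC C z) zC CC; lra.
Qed.

Definition proj_in_conv S x :=
  in_conv a S x /\ forall z, in_aff a S z -> dot x x <= dot z z.

Lemma proj_in_conv_defect S x : proj_in_conv S x -> defect a S (norm x).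
Proof.
case=> xS xmin; exists x; do !split=> //; first exact: in_conv_aff.
by move=> z /xmin; rewrite ler_sqrt ?dotvv_ge0.
Qed.

Lemma inner_loop_proj m S y S' x' : inner_loop a m S y S' x' ->
  in_aff a (m |: S) y -> proj_in_conv S' x' /\ dot x' x' <= dot y y.
Proof.
elim=> {S y S' x'} [S y C tc CS | S y C y' j S' x' tc _ exy' jS y'F _ IH] yS.
  split; last exact: touch_center_min tc yS.
  by split=> // z; apply: touch_center_min tc.
have y'S : in_aff a (m |: S :\ j) y'.
  apply: in_aff_subset (in_conv_aff y'F); apply/subsetP => i.
  by rewrite !inE => /andP[-> /orP[-> | ->]]; rewrite ?orbT.
have [x'proj x'y'] := IH y'S; split=> //; apply: le_trans x'y' _.
have [[s [s01 [-> _]]] _] := exy'.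
exact/dot_segment_le/(touch_center_min tc).
Qed.

Lemma most_violated_lt0 m x : (exists i, dot (a i) x < 0) ->
  most_violated a m ((norm x)^-1 *: x) -> dot (a m) x < 0.
Proof.
case=> i aix mv; have x0 : x != 0 by apply: contraTneq aix => ->; rewrite dotr0 ltxx.
move: (mv i); rewrite !dotZr ler_pM2l ?invr_gt0 ?norm_gt0 // => ami.
exact: le_lt_trans ami aix.
Qed.

Lemma alg_step_proj S x S' x' : in_aff a S x -> alg_step a S x S' x' ->
  proj_in_conv S' x' /\ dot x' x' <= dot x x / (1 + dot x x).
Proof.
move=> xS [viol [m [y [mv [yline [_ loop]]]]]].
have ym : dot y y <= dot x x / (1 + dot x x).
  apply: closest_on_line_le yline; first exact: dot_aa.
  by rewrite dotC ltW // most_violated_lt0.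
have yS : in_aff a (m |: S) y.
  case: yline => [[s ->] _]; apply: in_aff_line.
    by apply: in_aff_subset _ xS; apply: subsetUr.
  by apply: in_aff_subset _ (in_conv_aff (in_conv_set1 m)); rewrite sub1set setU11.
have [x'proj x'y] := inner_loop_proj loop yS.
by split=> //; apply: le_trans x'y ym.
Qed.

Lemma harmonic_step (u v : R) (k : nat) : 0 <= u -> u * k%:R <= 1 ->
  0 <= v -> v <= u / (1 + u) -> v * k.+1%:R <= 1.
Proof.
move=> u0 uk v0 vu; apply: le_trans (ler_wpM2r (ler0n _ _) vu) _.
rewrite mulrAC ler_pdivrMr ?mul1r; last lra.
by rewrite -addn1 natrD mulrDr mulr1; lra.
Qed.

Lemma alg_run_proj K Qs xs : alg_run a K Qs xs ->
  forall k, (1 <= k <= K)%N ->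
  proj_in_conv (Qs k) (xs k) /\ dot (xs k) (xs k) * k%:R <= 1.
Proof.
case=> j [Q1 [x1 step]]; elim=> [//|[|k] IH] /andP[_ kK].
  rewrite Q1 x1 dot_aa mulr1; do !split=> //; first exact: in_conv_set1.
  by move=> z /in_aff_set1 ->.
have [[xS _] xk] := IH (ltnW kK).
have [x'proj x'x] := alg_step_proj (in_conv_aff xS) (step k.+1 kK).
by split=> //; apply: harmonic_step x'x; rewrite ?dotvv_ge0.
Qed.

End Algorithm.

Lemma sqrt_le_inv (R : realType) (u t : R) (k : nat) : 0 <= u ->
  u * k%:R <= 1 -> 1 <= t -> t ^+ 2 <= k%:R -> Num.sqrt u <= t^-1.
Proof.
move=> u0 uk t1 tk; have t0 : 0 < t by lra.
have ut : u <= (t ^+ 2)^-1.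
  by rewrite -[_^-1]mul1r ler_pdivlMr ?exprn_gt0 //; nra.
have t'0 : 0 <= t^-1 by rewrite invr_ge0 ltW.
by rewrite -[t^-1]ger0_norm // -sqrtr_sqr ler_sqrt ?exprn_ge0 // exprVn.
Qed.

Theorem lemma2p11 (R : realType) (d n : nat) (a : 'I_n -> 'rV[R]_(d.+1))
  (ha : forall i, norm (a i) = 1)
  (K : nat) (Qs : nat -> {set 'I_n}) (xs : nat -> 'rV[R]_(d.+1))
  (hrun : alg_run a K Qs xs)
  (t : R) (k : nat) (ht : 1 <= t) (hk : (1 <= k <= K)%N) (hkt : t ^+ 2 <= k%:R) :
  exists r : R, defect a (Qs k) r /\ r <= t^-1.
Proof.
have [xproj xk] := alg_run_proj ha hrun hk.
exists (norm (xs k)); split; first exact: proj_in_conv_defect.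
exact: sqrt_le_inv (dotvv_ge0 _) xk ht hkt.
Qed.
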